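(* Let $n\ge1$ be an integer. There exists a constant $c_1=c_1(n)>0$ such that for all pairwise distinct points $z_1,z_2,z_3\in\mathbb{R}^2$, $$p_1(z_1,z_2,z_3)+p_2(z_1,z_2,z_3)\ge c_1\,c(z_1,z_2,z_3)^2.$$
   Context: For $i=1,2$ and $x\in\mathbb{R}^2\setminus\{0\}$, $K_i(x)=x_i^{2n-1}/|x|^{2n}$, and $p_i(z_1,z_2,z_3)=K_i(z_1-z_2)K_i(z_1-z_3)+K_i(z_2-z_1)K_i(z_2-z_3)+K_i(z_3-z_1)K_i(z_3-z_2)$. The Menger curvature $c(z_1,z_2,z_3)$ is the inverse of the radius of the circle through $z_1,z_2,z_3$ (equal to $0$ if the points are collinear). *)

From Stdlib Require Import Reals.
Open Scope R_scope.

Definition pt := (R * R)%type.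
Definition psub (a b : pt) : pt := (fst a - fst b, snd a - snd b).
Definition norm2 (x : pt) : R := fst x ^ 2 + snd x ^ 2.
Definition dist (a b : pt) : R := sqrt (norm2 (psub a b)).

Definition K1 (n : nat) (x : pt) : R := fst x ^ (2 * n - 1) / (norm2 x) ^ n.
Definition K2 (n : nat) (x : pt) : R := snd x ^ (2 * n - 1) / (norm2 x) ^ n.

Definition psym (K : pt -> R) (z1 z2 z3 : pt) : R :=
  K (psub z1 z2) * K (psub z1 z3) + K (psub z2 z1) * K (psub z2 z3)
  + K (psub z3 z1) * K (psub z3 z2).

Definition p1 (n : nat) := psym (K1 n).
Definition p2 (n : nat) := psym (K2 n).

Definition collinear (z1 z2 z3 : pt) : Prop :=
  (fst z2 - fst z1) * (snd z3 - snd z1) - (snd z2 - snd z1) * (fst z3 - fst z1) = 0.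

Definition is_menger (z1 z2 z3 : pt) (c : R) : Prop :=
  (collinear z1 z2 z3 /\ c = 0) \/
  (~ collinear z1 z2 z3 /\
   exists (w : pt) (r : R), 0 < r /\ dist z1 w = r /\ dist z2 w = r /\
     dist z3 w = r /\ c = / r).

From Pilot Require Import Defs.
From Stdlib Require Import Reals Lra Lia Psatz.
Open Scope R_scope.

(* Write g(t) = (1 + t^2)^n.  Since K_1 is odd, p_1 = -(K(u) K(v) + K(v) K(w) + K(w) K(u)) for the
   sides u = z1 - z2, v = z2 - z3, w = z3 - z1, and a non-vertical side s has K(s) = 1 / (s_1 g(t_s))
   with t_s its slope.  Then p_1 is area^2 times the second divided difference of g at the three
   slopes, divided by positive factors.  Splitting that divided difference into two tangent gaps of
   g and using the convexity of powers bounds it below by a multiple of (1 + t^2)^(n-1) at each of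
   its nodes; if two sides have slopes in [-1, 1] this yields
   p_1 >= C area^2 / (|u|^2 |v|^2 |w|^2) = C c(z1, z2, z3)^2 / 4.  Among three sides, two have
   slopes in [-1, 1] or two have inverse slopes in [-1, 1]; in the latter case the same argument
   applies to p_2 after exchanging the coordinates, and in both cases the other term is nonnegative. *)

Definition bracket (m : nat) (t : R) : R := (1 + t ^ 2) ^ m.

Lemma bracket_ge1 m t : 1 <= bracket m t.
Proof. apply pow_R1_Rle. pose proof (pow2_ge_0 t). lra. Qed.

Lemma bracket_pos m t : 0 < bracket m t.
Proof. pose proof (bracket_ge1 m t). lra. Qed.

Lemma bracket_opp m t : bracket m (- t) = bracket m t.
Proof. unfold bracket. f_equal. ring. Qed.

Lemma bracket_le_mul m c t s : 1 + t ^ 2 <= c * (1 + s ^ 2) ->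
  bracket m t <= c ^ m * bracket m s.
Proof.
  intros le_ts. unfold bracket. rewrite <- Rpow_mult_distr.
  apply pow_incr. pose proof (pow2_ge_0 t). lra.
Qed.

Definition divdiff2 (f : R -> R) (x y z : R) : R :=
  f x / ((x - y) * (x - z)) + f y / ((y - x) * (y - z)) + f z / ((z - x) * (z - y)).

Lemma divdiff2_swap12 f x y z : divdiff2 f x y z = divdiff2 f y x z.
Proof. unfold divdiff2. rewrite (Rmult_comm (z - y) (z - x)). lra. Qed.

Lemma divdiff2_swap23 f x y z : divdiff2 f x y z = divdiff2 f x z y.
Proof. unfold divdiff2. rewrite (Rmult_comm (x - z) (x - y)). lra. Qed.

Lemma divdiff2_opp f x y z : (forall t, f (- t) = f t) ->
  divdiff2 f (- x) (- y) (- z) = divdiff2 f x y z.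
Proof.
  intros f_even. unfold divdiff2. rewrite !f_even.
  replace ((- x - - y) * (- x - - z)) with ((x - y) * (x - z)) by ring.
  replace ((- y - - x) * (- y - - z)) with ((y - x) * (y - z)) by ring.
  replace ((- z - - x) * (- z - - y)) with ((z - x) * (z - y)) by ring.
  reflexivity.
Qed.

Definition tangent_gap (f : R -> R) (s p y : R) : R := f p - f y - s * (p - y).

(* The slope [s] is arbitrary: its contributions to the two difference quotients cancel. *)
Lemma divdiff2_tangent_gap f s x y z : x <> y -> y <> z -> x <> z ->
  divdiff2 f x y z =
  (tangent_gap f s z y / (z - y) + tangent_gap f s x y / (y - x)) / (z - x).
Proof.
  intros. unfold divdiff2, tangent_gap. field.
  repeat split; apply Rminus_eq_contra; auto.
Qed.

Definition pow_gap (j : nat) (u v : R) : R :=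
  tangent_gap (fun t => t ^ S j) (INR (S j) * v ^ j) u v.

Lemma pow_gap_S j u v :
  pow_gap (S j) u v = u * pow_gap j u v + INR (S j) * v ^ j * (u - v) ^ 2.
Proof. unfold pow_gap, tangent_gap. rewrite !S_INR. simpl. ring. Qed.

Lemma pow_gap_ge0 j u v : 0 <= u -> 0 <= v -> 0 <= pow_gap j u v.
Proof.
  intros u_ge0 v_ge0. induction j as [|j IH].
  - unfold pow_gap, tangent_gap. simpl. lra.
  - rewrite pow_gap_S.
    assert (0 <= INR (S j) * v ^ j * (u - v) ^ 2).
    { apply Rmult_le_pos; [apply Rmult_le_pos|]; auto using pos_INR, pow_le, pow2_ge_0. }
    nra.
Qed.

Lemma pow_gap_ge_sq k u v : 0 <= u -> 0 <= v -> u ^ k * (u - v) ^ 2 <= pow_gap (S k) u v.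
Proof.
  intros u_ge0 v_ge0. induction k as [|k IH].
  - unfold pow_gap, tangent_gap. simpl. lra.
  - rewrite pow_gap_S.
    assert (0 <= INR (S (S k)) * v ^ S k * (u - v) ^ 2).
    { apply Rmult_le_pos; [apply Rmult_le_pos|]; auto using pos_INR, pow_le, pow2_ge_0. }
    change (u ^ S k) with (u * u ^ k). nra.
Qed.

(* [2 (m + 1) y bracket m y] is the derivative of [bracket (S m)] at [y]. *)
Definition bracket_gap (m : nat) (p y : R) : R :=
  tangent_gap (bracket (S m)) (2 * INR (S m) * y * bracket m y) p y.

Lemma bracket_gap_eq m p y :
  bracket_gap m p y = pow_gap m (1 + p ^ 2) (1 + y ^ 2) + INR (S m) * bracket m y * (p - y) ^ 2.
Proof. unfold bracket_gap, pow_gap, tangent_gap, bracket. ring. Qed.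

Lemma bracket_gap_ge_pow_gap m p y : pow_gap m (1 + p ^ 2) (1 + y ^ 2) <= bracket_gap m p y.
Proof.
  rewrite bracket_gap_eq.
  assert (0 <= INR (S m) * bracket m y * (p - y) ^ 2).
  { apply Rmult_le_pos; [apply Rmult_le_pos|];
      auto using pos_INR, pow2_ge_0, Rlt_le, bracket_pos. }
  lra.
Qed.

Lemma bracket_gap_ge_near m p y : bracket m y * (p - y) ^ 2 <= bracket_gap m p y.
Proof.
  rewrite bracket_gap_eq.
  assert (0 <= pow_gap m (1 + p ^ 2) (1 + y ^ 2)) by (apply pow_gap_ge0; nra).
  assert (1 <= INR (S m)) by (rewrite S_INR; pose proof (pos_INR m); lra).
  assert (0 <= bracket m y * (p - y) ^ 2).
  { apply Rmult_le_pos; auto using pow2_ge_0, Rlt_le, bracket_pos. }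
  nra.
Qed.

Lemma bracket_gap_ge_far m p y : bracket m p * (p - y) ^ 2 <= 8 ^ m * bracket_gap m p y.
Proof.
  set (u := 1 + p ^ 2). set (v := 1 + y ^ 2). set (d := (p - y) ^ 2).
  assert (d_ge0 : 0 <= d) by apply pow2_ge_0.
  assert (e8 : 1 <= 8 ^ m) by (apply pow_R1_Rle; lra).
  pose proof (bracket_gap_ge_near m p y) as near_gap. fold d in near_gap.
  destruct (Rle_or_lt u (8 * v)) as [u_le | u_gt].
  - assert (bracket m p <= 8 ^ m * bracket m y) by (apply bracket_le_mul; exact u_le).
    pose proof (bracket_pos m y). nra.
  - destruct m as [|k].
    { unfold bracket in *. simpl in *. lra. }
    (* Here [p^2 > 8 y^2 + 7], so [(p + y)^2 >= u / 8]
       and [(u - v)^2 = d (p + y)^2] is at least [u d / 8]. *)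
    assert (sum_sq : u / 8 <= (p + y) ^ 2) by (unfold u, v in *; nra).
    assert (u_ge1 : 1 <= u) by (unfold u; nra).
    pose proof (pow_gap_ge_sq k u v ltac:(lra) ltac:(unfold v; nra)) as pow_sq.
    pose proof (bracket_gap_ge_pow_gap (S k) p y) as gap_le. fold u v in gap_le.
    replace ((u - v) ^ 2) with (d * (p + y) ^ 2) in pow_sq by (unfold u, v, d; ring).
    assert (u_k : 0 <= u ^ k) by (apply pow_le; lra).
    assert (u ^ S k * d <= 8 * bracket_gap (S k) p y).
    { change (u ^ S k) with (u * u ^ k). assert (0 <= u ^ k * d) by nra. nra. }
    assert (8 <= 8 ^ S k) by (change (8 ^ S k) with (8 * 8 ^ k); pose proof (pow_R1_Rle 8 k ltac:(lra)); lra).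
    assert (0 <= bracket_gap (S k) p y) by (pose proof (bracket_pos (S k) y); nra).
    unfold bracket at 1. fold u. nra.
Qed.

Lemma le_div_of_mul_le a b d : 0 < d -> a * d <= b -> a <= b / d.
Proof.
  intros d_pos ad_le. apply (Rmult_le_reg_r d); auto.
  unfold Rdiv. rewrite Rmult_assoc, Rinv_l, Rmult_1_r by lra. exact ad_le.
Qed.

Lemma bracket_gap_quot_ge m p y d : 0 < d -> (p - y) ^ 2 = d ^ 2 ->
  bracket m y * d <= bracket_gap m p y / d /\
  bracket m p * d <= 8 ^ m * (bracket_gap m p y / d).
Proof.
  intros d_pos d_sq. pose proof (bracket_gap_ge_near m p y). pose proof (bracket_gap_ge_far m p y).
  rewrite d_sq in *. split.
  - apply le_div_of_mul_le; nra.
  - unfold Rdiv. rewrite <- Rmult_assoc. apply le_div_of_mul_le; nra.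
Qed.

Lemma divdiff2_bracket_split m x y z : x < y < z ->
  divdiff2 (bracket (S m)) x y z =
  (bracket_gap m z y / (z - y) + bracket_gap m x y / (y - x)) / (z - x).
Proof. intros. apply divdiff2_tangent_gap; lra. Qed.

Lemma divdiff2_bracket_ge_mid m x y z : x < y < z ->
  bracket m y <= divdiff2 (bracket (S m)) x y z.
Proof.
  intros xyz. rewrite divdiff2_bracket_split by auto.
  apply le_div_of_mul_le; [lra |].
  destruct (bracket_gap_quot_ge m z y (z - y)) as [right _]; [lra | ring |].
  destruct (bracket_gap_quot_ge m x y (y - x)) as [left _]; [lra | ring |].
  lra.
Qed.

Definition kappa (m : nat) : R := / (2 * 8 ^ m * 9 ^ m).

Lemma kappa_pos m : 0 < kappa m.
Proof.
  unfold kappa. apply Rinv_0_lt_compat.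
  pose proof (pow_lt 8 m ltac:(lra)). pose proof (pow_lt 9 m ltac:(lra)).
  apply Rmult_lt_0_compat; [apply Rmult_lt_0_compat |]; lra.
Qed.

Lemma kappa_le1 m : kappa m <= 1.
Proof.
  unfold kappa. rewrite <- Rinv_1. apply Rinv_le_contravar; [lra |].
  pose proof (pow_R1_Rle 8 m ltac:(lra)). pose proof (pow_R1_Rle 9 m ltac:(lra)). nra.
Qed.

Lemma bracket_gap_quot_sum_ge m x y z : x < y < z ->
  bracket m z * (z - x)
  <= 2 * 8 ^ m * 9 ^ m * (bracket_gap m z y / (z - y) + bracket_gap m x y / (y - x)).
Proof.
  intros xyz.
  destruct (bracket_gap_quot_ge m z y (z - y)) as [zy_near zy_far]; [lra | ring |].
  destruct (bracket_gap_quot_ge m x y (y - x)) as [xy_near xy_far]; [lra | ring |].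
  set (Qz := bracket_gap m z y / (z - y)) in *.
  set (Qx := bracket_gap m x y / (y - x)) in *.
  set (e8 := 8 ^ m) in *. set (e9 := 9 ^ m).
  assert (e8_ge1 : 1 <= e8) by (apply pow_R1_Rle; lra).
  assert (e9_ge1 : 1 <= e9) by (apply pow_R1_Rle; lra).
  pose proof (bracket_pos m x). pose proof (bracket_pos m y). pose proof (bracket_pos m z).
  assert (Qx_ge0 : 0 <= Qx) by nra.
  assert (Qz_ge0 : 0 <= Qz) by nra.
  assert (0 <= e8 * e9 * Qx) by (apply Rmult_le_pos; nra).
  assert (0 <= e8 * e9 * Qz) by (apply Rmult_le_pos; nra).
  destruct (Rle_or_lt (z - x) (2 * (z - y))) as [zy_long | xy_long].
  - assert (bracket m z * (z - x) <= bracket m z * (2 * (z - y)))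
      by (apply Rmult_le_compat_l; lra).
    assert (e8 * Qz * 1 <= e8 * Qz * e9) by (apply Rmult_le_compat_l; nra).
    lra.
  - destruct (Rle_or_lt (z ^ 2) (9 * y ^ 2)) as [zy_sq | zy_sq].
    + assert (bracket m z <= e9 * bracket m y) by (apply bracket_le_mul; lra).
      assert (bracket m z * (z - x) <= e9 * bracket m y * (z - x))
        by (apply Rmult_le_compat_r; lra).
      assert (e9 * (bracket m y * (z - x)) <= e9 * (Qz + Qx))
        by (apply Rmult_le_compat_l; lra).
      assert (1 * (e9 * (Qz + Qx)) <= e8 * (e9 * (Qz + Qx)))
        by (apply Rmult_le_compat_r; nra).
      lra.
    + (* [|y| < |z| / 3] and [y] is closer to [z] than to [x], hence [|x| > |z| / 3] *)
      assert (zx_sq : z ^ 2 <= 9 * x ^ 2).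
      { destruct (Rle_or_lt z 0) as [z_npos | z_pos]; [nra |].
        assert (3 * y < z) by nra. nra. }
      assert (bracket m z <= e9 * bracket m x) by (apply bracket_le_mul; lra).
      assert (bracket m z * (z - x) <= e9 * bracket m x * (2 * (y - x))) by nra.
      assert (e9 * (bracket m x * (y - x)) <= e9 * (e8 * Qx))
        by (apply Rmult_le_compat_l; lra).
      lra.
Qed.

Lemma divdiff2_bracket_ge_max m x y z : x < y < z ->
  kappa m * bracket m z <= divdiff2 (bracket (S m)) x y z.
Proof.
  intros xyz. rewrite divdiff2_bracket_split by auto.
  apply le_div_of_mul_le; [lra |].
  pose proof (bracket_gap_quot_sum_ge m x y z xyz) as sum_ge.
  pose proof (pow_lt 8 m ltac:(lra)). pose proof (pow_lt 9 m ltac:(lra)).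
  unfold kappa. set (e := 2 * 8 ^ m * 9 ^ m) in *.
  assert (e_pos : 0 < e) by (unfold e; apply Rmult_lt_0_compat; [apply Rmult_lt_0_compat |]; lra).
  apply (Rmult_le_reg_l e); auto.
  replace (e * (/ e * bracket m z * (z - x))) with (bracket m z * (z - x)) by (field; lra).
  exact sum_ge.
Qed.

Lemma divdiff2_bracket_ge_top m x y z : y < x -> z < x -> y <> z ->
  kappa m * bracket m x <= divdiff2 (bracket (S m)) x y z.
Proof.
  intros yx zx yz. rewrite divdiff2_swap12, divdiff2_swap23.
  destruct (Rlt_or_le y z) as [y_lt_z | z_le_y].
  - apply divdiff2_bracket_ge_max. lra.
  - rewrite divdiff2_swap12. apply divdiff2_bracket_ge_max. lra.
Qed.

Lemma divdiff2_bracket_ge m x y z : x <> y -> x <> z -> y <> z ->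
  kappa m * bracket m x <= divdiff2 (bracket (S m)) x y z.
Proof.
  intros xy xz yz.
  assert (mid : forall u v w, u < v < w ->
            kappa m * bracket m v <= divdiff2 (bracket (S m)) u v w).
  { intros u v w uvw. pose proof (kappa_pos m). pose proof (kappa_le1 m).
    pose proof (bracket_pos m v). pose proof (divdiff2_bracket_ge_mid m u v w uvw). nra. }
  destruct (Rtotal_order x y) as [x_lt_y | [-> | y_lt_x]]; [| easy |];
  destruct (Rtotal_order x z) as [x_lt_z | [-> | z_lt_x]]; try easy.
  - rewrite <- (divdiff2_opp _ x y z), <- (bracket_opp m x) by apply bracket_opp.
    apply divdiff2_bracket_ge_top; lra.
  - rewrite divdiff2_swap23, divdiff2_swap12. apply mid. lra.
  - rewrite divdiff2_swap12. apply mid. lra.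
  - apply divdiff2_bracket_ge_top; lra.
Qed.

Lemma pow2_pos x : x <> 0 -> 0 < x ^ 2.
Proof. intros. rewrite <- Rsqr_pow2. apply Rsqr_pos_lt. auto. Qed.

Lemma one_add_sq_pos t : 0 < 1 + t ^ 2.
Proof. pose proof (pow2_ge_0 t). lra. Qed.

Lemma pow_odd_opp k x : (- x) ^ S (2 * k) = - x ^ S (2 * k).
Proof. replace (- x) with (-1 * x) by ring. rewrite Rpow_mult_distr, pow_1_odd. ring. Qed.

Definition slope (z w : pt) : R := (snd z - snd w) / (fst z - fst w).

Definition area2 (z1 z2 z3 : pt) : R :=
  (fst z2 - fst z1) * (snd z3 - snd z1) - (snd z2 - snd z1) * (fst z3 - fst z1).

Lemma area2_cycle z1 z2 z3 : area2 z1 z2 z3 = area2 z2 z3 z1.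
Proof. unfold area2. ring. Qed.

Lemma slope_sub z1 z2 z3 : fst z1 <> fst z2 -> fst z2 <> fst z3 ->
  slope z2 z3 = slope z1 z2 + area2 z1 z2 z3 / ((fst z1 - fst z2) * (fst z2 - fst z3)).
Proof. intros. unfold slope, area2. field. split; apply Rminus_eq_contra; auto. Qed.

Lemma slope_neq z1 z2 z3 : fst z1 <> fst z2 -> fst z2 <> fst z3 -> area2 z1 z2 z3 <> 0 ->
  slope z1 z2 <> slope z2 z3.
Proof.
  intros x12 x23 area E. rewrite (slope_sub z1 z2 z3 x12 x23) in E.
  apply area. apply (Rmult_eq_reg_r (/ ((fst z1 - fst z2) * (fst z2 - fst z3)))).
  - rewrite Rmult_0_l. lra.
  - apply Rinv_neq_0_compat, Rmult_integral_contrapositive. split; apply Rminus_eq_contra; auto.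
Qed.

Lemma divdiff2_slopes (g : R -> R) (z1 z2 z3 : pt) :
  fst z1 <> fst z2 -> fst z2 <> fst z3 -> fst z3 <> fst z1 -> area2 z1 z2 z3 <> 0 ->
  g (slope z1 z2) <> 0 -> g (slope z2 z3) <> 0 -> g (slope z3 z1) <> 0 ->
  - (/ ((fst z1 - fst z2) * g (slope z1 z2)) * / ((fst z2 - fst z3) * g (slope z2 z3))
     + / ((fst z2 - fst z3) * g (slope z2 z3)) * / ((fst z3 - fst z1) * g (slope z3 z1))
     + / ((fst z3 - fst z1) * g (slope z3 z1)) * / ((fst z1 - fst z2) * g (slope z1 z2)))
  = area2 z1 z2 z3 ^ 2 * divdiff2 g (slope z1 z2) (slope z2 z3) (slope z3 z1)
    / (((fst z1 - fst z2) * (fst z2 - fst z3) * (fst z3 - fst z1)) ^ 2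
       * g (slope z1 z2) * g (slope z2 z3) * g (slope z3 z1)).
Proof.
  intros x12 x23 x31 area g12 g23 g31.
  pose proof (slope_sub z1 z2 z3 x12 x23) as s23.
  pose proof (slope_sub z3 z1 z2 x31 x12) as s12.
  rewrite <- area2_cycle, <- area2_cycle in s12.
  unfold divdiff2. revert g12 g23 g31.
  generalize (g (slope z1 z2)) (g (slope z2 z3)) (g (slope z3 z1)).
  intros g1 g2 g3 g12 g23 g31. rewrite s23, s12.
  generalize (slope z3 z1) (area2 z1 z2 z3) area. intros s A A_nz.
  assert (A_mul : forall d, d <> 0 -> A * d <> 0)
    by (intros; apply Rmult_integral_contrapositive; auto).
  (* Each remaining side condition says that two slopes differ, i.e. [A * dx <> 0] for one
     of the three abscissa differences [dx]. *)
  field. repeat split; try apply Rminus_eq_contra; auto; intro E;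
    first [ apply (A_mul (fst z1 - fst z2)); solve [ apply Rminus_eq_contra; auto | lra ]
          | apply (A_mul (fst z2 - fst z3)); solve [ apply Rminus_eq_contra; auto | lra ]
          | apply (A_mul (fst z3 - fst z1)); solve [ apply Rminus_eq_contra; auto | lra ] ].
Qed.

Lemma K1_slope m v : fst v <> 0 -> K1 (S m) v = / (fst v * bracket (S m) (snd v / fst v)).
Proof.
  intros x_nz. unfold K1, bracket, norm2.
  replace (2 * S m - 1)%nat with (S (2 * m)) by lia.
  replace (fst v ^ 2 + snd v ^ 2) with (fst v ^ 2 * (1 + (snd v / fst v) ^ 2)) by (field; auto).
  rewrite Rpow_mult_distr, <- pow_mult.
  replace (2 * S m)%nat with (S (2 * m) + 1)%nat by lia. rewrite pow_add.
  pose proof (one_add_sq_pos (snd v / fst v)).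
  field. repeat split; auto; apply pow_nonzero; auto; lra.
Qed.

Lemma K1_vertical m v : fst v = 0 -> K1 (S m) v = 0.
Proof.
  intros x0. unfold K1. rewrite x0. replace (2 * S m - 1)%nat with (S (2 * m)) by lia.
  rewrite pow_ne_zero by lia. unfold Rdiv. ring.
Qed.

Lemma K1_psub_antisym m z w : K1 (S m) (psub w z) = - K1 (S m) (psub z w).
Proof.
  unfold K1, norm2, psub. cbn [fst snd]. replace (2 * S m - 1)%nat with (S (2 * m)) by lia.
  replace (fst w - fst z) with (- (fst z - fst w)) by ring.
  replace (snd w - snd z) with (- (snd z - snd w)) by ring.
  rewrite pow_odd_opp, <- !Rsqr_pow2, <- !Rsqr_neg. unfold Rdiv. ring.
Qed.

Lemma psym_antisym (K : pt -> R) z1 z2 z3 : (forall z w, K (psub w z) = - K (psub z w)) ->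
  psym K z1 z2 z3 = - (K (psub z1 z2) * K (psub z2 z3) + K (psub z2 z3) * K (psub z3 z1)
                       + K (psub z3 z1) * K (psub z1 z2)).
Proof.
  intros K_antisym. unfold psym.
  rewrite (K_antisym z1 z3), (K_antisym z1 z2), (K_antisym z2 z3). ring.
Qed.

Lemma p1_cycle n z1 z2 z3 : p1 n z1 z2 z3 = p1 n z2 z3 z1.
Proof. unfold p1, psym. ring. Qed.

Definition swap_xy (z : pt) : pt := (snd z, fst z).

Lemma p2_swap n z1 z2 z3 : p2 n z1 z2 z3 = p1 n (swap_xy z1) (swap_xy z2) (swap_xy z3).
Proof.
  assert (K_swap : forall z w, K2 n (psub z w) = K1 n (psub (swap_xy z) (swap_xy w))).
  { intros z w. unfold K1, K2, norm2, psub, swap_xy. cbn [fst snd]. f_equal. f_equal. ring. }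
  unfold p1, p2, psym. rewrite !K_swap. reflexivity.
Qed.

Lemma p1_slopes m z1 z2 z3 :
  fst z1 <> fst z2 -> fst z2 <> fst z3 -> fst z3 <> fst z1 -> area2 z1 z2 z3 <> 0 ->
  p1 (S m) z1 z2 z3
  = area2 z1 z2 z3 ^ 2 * divdiff2 (bracket (S m)) (slope z1 z2) (slope z2 z3) (slope z3 z1)
    / (((fst z1 - fst z2) * (fst z2 - fst z3) * (fst z3 - fst z1)) ^ 2
       * bracket (S m) (slope z1 z2) * bracket (S m) (slope z2 z3) * bracket (S m) (slope z3 z1)).
Proof.
  intros x12 x23 x31 area.
  unfold p1. rewrite psym_antisym by apply K1_psub_antisym.
  rewrite !K1_slope by (cbn [psub fst]; apply Rminus_eq_contra; auto).
  apply divdiff2_slopes; auto; apply Rgt_not_eq, bracket_pos.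
Qed.

Lemma p1_vertical m z1 z2 z3 : fst z1 = fst z2 ->
  p1 (S m) z1 z2 z3
  = ((fst z2 - fst z3) ^ 2) ^ S (2 * m) / (norm2 (psub z2 z3) * norm2 (psub z3 z1)) ^ S m.
Proof.
  intros x12. unfold p1. rewrite psym_antisym by apply K1_psub_antisym.
  rewrite (K1_vertical m (psub z1 z2)) by (cbn [psub fst]; lra).
  unfold K1. replace (2 * S m - 1)%nat with (S (2 * m)) by lia. cbn [psub fst].
  replace (fst z3 - fst z1) with (- (fst z2 - fst z3)) by lra.
  rewrite pow_odd_opp.
  replace ((fst z2 - fst z3) ^ 2) with ((fst z2 - fst z3) * (fst z2 - fst z3)) by ring.
  rewrite !Rpow_mult_distr. unfold Rdiv. rewrite Rinv_mult. ring.
Qed.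

Lemma norm2_nonneg v : 0 <= norm2 v.
Proof. unfold norm2. pose proof (pow2_ge_0 (fst v)). pose proof (pow2_ge_0 (snd v)). lra. Qed.

Lemma norm2_psub_pos z w : z <> w -> 0 < norm2 (psub z w).
Proof.
  intros zw. unfold norm2, psub. cbn [fst snd].
  pose proof (pow2_ge_0 (fst z - fst w)). pose proof (pow2_ge_0 (snd z - snd w)).
  destruct (Req_dec (fst z - fst w) 0) as [dx | dx].
  - assert (dy : snd z - snd w <> 0).
    { intro dy. apply zw. destruct z, w. cbn in *. f_equal; lra. }
    pose proof (pow2_pos _ dy). lra.
  - pose proof (pow2_pos _ dx). lra.
Qed.

Lemma norm2_psub_slope z w : fst z <> fst w ->
  norm2 (psub z w) = (fst z - fst w) ^ 2 * (1 + slope z w ^ 2).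
Proof. intros. unfold norm2, psub, slope. cbn [fst snd]. field. apply Rminus_eq_contra. auto. Qed.

Definition area_ratio (z1 z2 z3 : pt) : R :=
  area2 z1 z2 z3 ^ 2 / (norm2 (psub z1 z2) * norm2 (psub z2 z3) * norm2 (psub z3 z1)).

Lemma area_ratio_nonneg z1 z2 z3 : z1 <> z2 -> z2 <> z3 -> z3 <> z1 ->
  0 <= area_ratio z1 z2 z3.
Proof.
  intros. unfold area_ratio. apply Rmult_le_pos; [apply pow2_ge_0 |].
  apply Rlt_le, Rinv_0_lt_compat. repeat apply Rmult_lt_0_compat; auto using norm2_psub_pos.
Qed.

Lemma p1_ge_slopes m z1 z2 z3 : z1 <> z2 -> z2 <> z3 -> z3 <> z1 ->
  fst z1 <> fst z2 -> fst z2 <> fst z3 -> fst z3 <> fst z1 -> area2 z1 z2 z3 <> 0 ->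
  kappa m * area_ratio z1 z2 z3 / (bracket m (slope z2 z3) * bracket m (slope z3 z1))
  <= p1 (S m) z1 z2 z3.
Proof.
  intros z12 z23 z31 x12 x23 x31 area.
  pose proof (divdiff2_bracket_ge m (slope z1 z2) (slope z2 z3) (slope z3 z1)) as dd.
  assert (area231 : area2 z2 z3 z1 <> 0) by (rewrite <- area2_cycle; auto).
  assert (area312 : area2 z3 z1 z2 <> 0) by (rewrite <- area2_cycle, <- area2_cycle; auto).
  specialize (dd (slope_neq z1 z2 z3 x12 x23 area)
                 (not_eq_sym (slope_neq z3 z1 z2 x31 x12 area312))
                 (slope_neq z2 z3 z1 x23 x31 area231)).
  pose proof (area_ratio_nonneg z1 z2 z3 z12 z23 z31) as ratio_ge0.
  rewrite p1_slopes by auto.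
  set (s12 := slope z1 z2) in *. set (s23 := slope z2 z3) in *. set (s31 := slope z3 z1) in *.
  set (P := (fst z1 - fst z2) * (fst z2 - fst z3) * (fst z3 - fst z1)).
  set (D := P ^ 2 * bracket (S m) s12 * bracket (S m) s23 * bracket (S m) s31).
  assert (P_nz : P <> 0).
  { unfold P. intro E. apply Rmult_integral in E as [E | E]; [apply Rmult_integral in E as [E | E] |].
    - apply x12. lra.
    - apply x23. lra.
    - apply x31. lra. }
  assert (D_pos : 0 < D).
  { unfold D. pose proof (pow2_pos P P_nz).
    apply Rmult_lt_0_compat; [apply Rmult_lt_0_compat; [apply Rmult_lt_0_compat |] |];
      auto using bracket_pos. }
  apply Rle_trans with (area2 z1 z2 z3 ^ 2 * (kappa m * bracket m s12) / D).
  - right. unfold area_ratio, D, P. rewrite !norm2_psub_slope by auto. fold s12 s23 s31.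
    change (bracket (S m) ?t) with ((1 + t ^ 2) * bracket m t).
    pose proof (one_add_sq_pos s12). pose proof (one_add_sq_pos s23).
    pose proof (one_add_sq_pos s31). pose proof (bracket_pos m s12).
    pose proof (bracket_pos m s23). pose proof (bracket_pos m s31).
    field. repeat split; try (apply Rminus_eq_contra; assumption); lra.
  - unfold Rdiv. apply Rmult_le_compat_r; [apply Rlt_le, Rinv_0_lt_compat; auto |].
    apply Rmult_le_compat_l; [apply pow2_ge_0 | exact dd].
Qed.

Definition shallow (z w : pt) : Prop := (snd z - snd w) ^ 2 <= (fst z - fst w) ^ 2.

Lemma shallow_fst_neq z w : z <> w -> shallow z w -> fst z <> fst w.
Proof.
  intros zw sh E. apply zw. unfold shallow in sh. rewrite E, Rminus_diag in sh.
  assert (snd z = snd w) by (pose proof (pow2_ge_0 (snd z - snd w)); simpl in *; nra).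
  destruct z, w. cbn in *. congruence.
Qed.

Lemma bracket_slope_le m z w : z <> w -> shallow z w -> bracket m (slope z w) <= 2 ^ m.
Proof.
  intros zw sh. pose proof (shallow_fst_neq z w zw sh) as dx.
  assert (slope_sq : slope z w ^ 2 * (fst z - fst w) ^ 2 = (snd z - snd w) ^ 2).
  { unfold slope. field. apply Rminus_eq_contra. auto. }
  assert (dx_sq : 0 < (fst z - fst w) ^ 2) by (apply pow2_pos, Rminus_eq_contra; auto).
  unfold shallow in sh.
  apply Rle_trans with (2 ^ m * bracket m 0).
  - apply bracket_le_mul. nra.
  - unfold bracket. rewrite pow_i, Rplus_0_r, pow1 by lia. lra.
Qed.

Lemma p1_ge_shallow_oblique m z1 z2 z3 : z1 <> z2 -> z2 <> z3 -> z3 <> z1 ->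
  area2 z1 z2 z3 <> 0 -> fst z1 <> fst z2 -> shallow z2 z3 -> shallow z3 z1 ->
  kappa m / 4 ^ m * area_ratio z1 z2 z3 <= p1 (S m) z1 z2 z3.
Proof.
  intros z12 z23 z31 area x12 sh23 sh31.
  eapply Rle_trans; [| apply p1_ge_slopes; auto using shallow_fst_neq].
  pose proof (bracket_slope_le m z2 z3 z23 sh23).
  pose proof (bracket_slope_le m z3 z1 z31 sh31).
  pose proof (bracket_pos m (slope z2 z3)). pose proof (bracket_pos m (slope z3 z1)).
  assert (U : bracket m (slope z2 z3) * bracket m (slope z3 z1) <= 4 ^ m).
  { replace 4 with (2 * 2) by lra. rewrite Rpow_mult_distr. apply Rmult_le_compat; lra. }
  pose proof (kappa_pos m). pose proof (area_ratio_nonneg z1 z2 z3 z12 z23 z31).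
  unfold Rdiv. rewrite Rmult_assoc, (Rmult_comm (/ 4 ^ m)), <- Rmult_assoc.
  apply Rmult_le_compat_l; [apply Rmult_le_pos; lra |].
  apply Rinv_le_contravar; [apply Rmult_lt_0_compat |]; lra.
Qed.

Lemma p1_ge_shallow_vertical m z1 z2 z3 : z1 <> z2 -> z2 <> z3 -> z3 <> z1 ->
  fst z1 = fst z2 -> shallow z2 z3 -> shallow z3 z1 ->
  kappa m / 4 ^ m * area_ratio z1 z2 z3 <= p1 (S m) z1 z2 z3.
Proof.
  intros z12 z23 z31 x12 sh23 sh31. rewrite p1_vertical by auto.
  set (B := (fst z2 - fst z3) ^ 2).
  set (N := norm2 (psub z2 z3) * norm2 (psub z3 z1)).
  assert (N_pos : 0 < N) by (apply Rmult_lt_0_compat; auto using norm2_psub_pos).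
  assert (B_ge0 : 0 <= B) by apply pow2_ge_0.
  assert (N_le : N <= 4 * B ^ 2).
  { assert (norm2 (psub z2 z3) <= 2 * B).
    { unfold shallow in sh23. unfold norm2, psub, B. cbn [fst snd]. lra. }
    assert (norm2 (psub z3 z1) <= 2 * B).
    { unfold shallow in sh31. unfold norm2, psub, B. cbn [fst snd]. rewrite x12 in *.
      replace ((fst z3 - fst z2) ^ 2) with ((fst z2 - fst z3) ^ 2) in * by ring. lra. }
    replace (4 * B ^ 2) with (2 * B * (2 * B)) by ring.
    apply Rmult_le_compat; auto using norm2_nonneg. }
  replace (area_ratio z1 z2 z3) with (B / N).
  2: { unfold area_ratio, N, B. pose proof (norm2_psub_pos z1 z2 z12).
       pose proof (norm2_psub_pos z2 z3 z23). pose proof (norm2_psub_pos z3 z1 z31).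
       replace (area2 z1 z2 z3 ^ 2) with (norm2 (psub z1 z2) * (fst z2 - fst z3) ^ 2)
         by (unfold area2, norm2, psub; cbn [fst snd]; rewrite x12; ring).
       field. repeat split; lra. }
  replace (B ^ S (2 * m) / N ^ S m) with (B / N * (B ^ 2 / N) ^ m).
  2: { unfold Rdiv. rewrite Rpow_mult_distr, pow_inv.
       change (B ^ S (2 * m)) with (B * B ^ (2 * m)). rewrite pow_mult.
       change (N ^ S m) with (N * N ^ m). field. split; [apply pow_nonzero |]; lra. }
  assert (/ 4 <= B ^ 2 / N) by (apply le_div_of_mul_le; lra).
  assert (/ 4 ^ m <= (B ^ 2 / N) ^ m) by (rewrite <- pow_inv; apply pow_incr; lra).
  assert (0 <= B / N) by (apply Rmult_le_pos; [lra | apply Rlt_le, Rinv_0_lt_compat; lra]).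
  assert (kappa m / 4 ^ m <= / 4 ^ m).
  { pose proof (kappa_le1 m). pose proof (pow_lt 4 m ltac:(lra)).
    unfold Rdiv. rewrite <- (Rmult_1_l (/ 4 ^ m)) at 2.
    apply Rmult_le_compat_r; [apply Rlt_le, Rinv_0_lt_compat |]; lra. }
  nra.
Qed.

Lemma p1_ge_shallow m z1 z2 z3 : z1 <> z2 -> z2 <> z3 -> z3 <> z1 -> area2 z1 z2 z3 <> 0 ->
  shallow z2 z3 -> shallow z3 z1 -> kappa m / 4 ^ m * area_ratio z1 z2 z3 <= p1 (S m) z1 z2 z3.
Proof.
  intros. destruct (Req_dec (fst z1) (fst z2)).
  - apply p1_ge_shallow_vertical; auto.
  - apply p1_ge_shallow_oblique; auto.
Qed.

Lemma p1_nonneg_vertical m z1 z2 z3 : z2 <> z3 -> z3 <> z1 -> fst z1 = fst z2 ->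
  0 <= p1 (S m) z1 z2 z3.
Proof.
  intros z23 z31 x12. rewrite p1_vertical by auto.
  apply Rmult_le_pos; [apply pow_le, pow2_ge_0 |].
  apply Rlt_le, Rinv_0_lt_compat, pow_lt, Rmult_lt_0_compat; auto using norm2_psub_pos.
Qed.

Lemma p1_nonneg m z1 z2 z3 : z1 <> z2 -> z2 <> z3 -> z3 <> z1 -> area2 z1 z2 z3 <> 0 ->
  0 <= p1 (S m) z1 z2 z3.
Proof.
  intros z12 z23 z31 area.
  destruct (Req_dec (fst z1) (fst z2)) as [x12 | x12].
  { apply p1_nonneg_vertical; auto. }
  destruct (Req_dec (fst z2) (fst z3)) as [x23 | x23].
  { rewrite p1_cycle. apply p1_nonneg_vertical; auto. }
  destruct (Req_dec (fst z3) (fst z1)) as [x31 | x31].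
  { rewrite p1_cycle, p1_cycle. apply p1_nonneg_vertical; auto. }
  eapply Rle_trans; [| apply p1_ge_slopes; auto].
  pose proof (kappa_pos m). pose proof (area_ratio_nonneg z1 z2 z3 z12 z23 z31).
  apply Rmult_le_pos; [apply Rmult_le_pos; lra |].
  apply Rlt_le, Rinv_0_lt_compat, Rmult_lt_0_compat; apply bracket_pos.
Qed.

Lemma p1_collinear_vertical m z1 z2 z3 : z1 <> z2 -> fst z1 = fst z2 -> area2 z1 z2 z3 = 0 ->
  p1 (S m) z1 z2 z3 = 0.
Proof.
  intros z12 x12 area. rewrite p1_vertical by auto.
  assert (y12 : snd z2 - snd z1 <> 0).
  { intro E. apply z12. destruct z1, z2. cbn in *. f_equal; lra. }
  assert (x23 : fst z3 - fst z2 = 0).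
  { unfold area2 in area. rewrite x12, Rminus_diag, Rmult_0_l, Rminus_0_l in area.
    apply Ropp_eq_0_compat in area. rewrite Ropp_involutive in area.
    apply Rmult_integral in area as [E | E]; [contradiction | exact E]. }
  replace (fst z2 - fst z3) with 0 by lra. rewrite pow_i, pow_i by lia. unfold Rdiv. ring.
Qed.

Lemma p1_collinear m z1 z2 z3 : z1 <> z2 -> z2 <> z3 -> z3 <> z1 -> area2 z1 z2 z3 = 0 ->
  p1 (S m) z1 z2 z3 = 0.
Proof.
  intros z12 z23 z31 area.
  destruct (Req_dec (fst z1) (fst z2)) as [x12 | x12].
  { apply p1_collinear_vertical; auto. }
  destruct (Req_dec (fst z2) (fst z3)) as [x23 | x23].
  { rewrite p1_cycle. apply p1_collinear_vertical; auto. rewrite <- area2_cycle. auto. }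
  destruct (Req_dec (fst z3) (fst z1)) as [x31 | x31].
  { rewrite p1_cycle, p1_cycle. apply p1_collinear_vertical; auto.
    rewrite <- area2_cycle, <- area2_cycle. auto. }
  assert (s23 : slope z2 z3 = slope z1 z2)
    by (rewrite (slope_sub z1 z2 z3), area by auto; unfold Rdiv; ring).
  assert (s31 : slope z3 z1 = slope z1 z2)
    by (rewrite (slope_sub z3 z1 z2), <- area2_cycle, <- area2_cycle, area by auto;
        unfold Rdiv; ring).
  unfold p1. rewrite psym_antisym by apply K1_psub_antisym.
  rewrite !K1_slope by (cbn [psub fst]; apply Rminus_eq_contra; auto).
  change (snd (psub ?z ?w) / fst (psub ?z ?w)) with (slope z w).
  rewrite s23, s31. cbn [psub fst].
  (* With a common slope [s] and abscissa differences [d1 + d2 + d3 = 0],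
     [p1 = - (d1 + d2 + d3) / (d1 d2 d3 g(s)^2) = 0]. *)
  pose proof (bracket_pos (S m) (slope z1 z2)).
  field. repeat split; try apply Rminus_eq_contra; auto; lra.
Qed.

Lemma swap_xy_neq z w : z <> w -> swap_xy z <> swap_xy w.
Proof. intros zw E. apply zw. destruct z, w. unfold swap_xy in E. cbn in E. congruence. Qed.

Lemma area2_swap z1 z2 z3 : area2 (swap_xy z1) (swap_xy z2) (swap_xy z3) = - area2 z1 z2 z3.
Proof. unfold area2, swap_xy. cbn [fst snd]. ring. Qed.

Lemma area_ratio_cycle z1 z2 z3 : area_ratio z1 z2 z3 = area_ratio z2 z3 z1.
Proof.
  unfold area_ratio. rewrite area2_cycle.
  replace (norm2 (psub z1 z2) * norm2 (psub z2 z3) * norm2 (psub z3 z1))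
    with (norm2 (psub z2 z3) * norm2 (psub z3 z1) * norm2 (psub z1 z2)) by ring.
  reflexivity.
Qed.

Lemma area_ratio_swap z1 z2 z3 :
  area_ratio (swap_xy z1) (swap_xy z2) (swap_xy z3) = area_ratio z1 z2 z3.
Proof.
  assert (norm_swap : forall z w, norm2 (psub (swap_xy z) (swap_xy w)) = norm2 (psub z w))
    by (intros; unfold norm2, psub, swap_xy; cbn [fst snd]; ring).
  unfold area_ratio. rewrite area2_swap, !norm_swap.
  replace ((- area2 z1 z2 z3) ^ 2) with (area2 z1 z2 z3 ^ 2) by ring. reflexivity.
Qed.

Definition two_shallow (z1 z2 z3 : pt) : Prop :=
  (shallow z1 z2 /\ shallow z2 z3) \/ (shallow z2 z3 /\ shallow z3 z1)
  \/ (shallow z3 z1 /\ shallow z1 z2).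

Lemma two_shallow_or_swap z1 z2 z3 :
  two_shallow z1 z2 z3 \/ two_shallow (swap_xy z1) (swap_xy z2) (swap_xy z3).
Proof.
  assert (sh : forall z w, shallow z w \/ shallow (swap_xy z) (swap_xy w))
    by (intros; unfold shallow, swap_xy; cbn [fst snd]; lra).
  unfold two_shallow. destruct (sh z1 z2), (sh z2 z3), (sh z3 z1); tauto.
Qed.

Lemma p1_ge_two_shallow m z1 z2 z3 : z1 <> z2 -> z2 <> z3 -> z3 <> z1 -> area2 z1 z2 z3 <> 0 ->
  two_shallow z1 z2 z3 -> kappa m / 4 ^ m * area_ratio z1 z2 z3 <= p1 (S m) z1 z2 z3.
Proof.
  intros z12 z23 z31 area [[sh12 sh23] | [[sh23 sh31] | [sh31 sh12]]].
  - rewrite p1_cycle, p1_cycle, area_ratio_cycle, area_ratio_cycle.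
    apply p1_ge_shallow; auto. rewrite <- area2_cycle, <- area2_cycle. auto.
  - apply p1_ge_shallow; auto.
  - rewrite p1_cycle, area_ratio_cycle.
    apply p1_ge_shallow; auto. rewrite <- area2_cycle. auto.
Qed.

Lemma p1_add_p2_ge m z1 z2 z3 : z1 <> z2 -> z2 <> z3 -> z3 <> z1 -> area2 z1 z2 z3 <> 0 ->
  kappa m / 4 ^ m * area_ratio z1 z2 z3 <= p1 (S m) z1 z2 z3 + p2 (S m) z1 z2 z3.
Proof.
  intros z12 z23 z31 area. rewrite p2_swap.
  pose proof (swap_xy_neq _ _ z12). pose proof (swap_xy_neq _ _ z23).
  pose proof (swap_xy_neq _ _ z31).
  assert (area_swap : area2 (swap_xy z1) (swap_xy z2) (swap_xy z3) <> 0)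
    by (rewrite area2_swap; intro E; apply area; lra).
  pose proof (p1_nonneg m z1 z2 z3 z12 z23 z31 area).
  assert (0 <= p1 (S m) (swap_xy z1) (swap_xy z2) (swap_xy z3)) by (apply p1_nonneg; auto).
  destruct (two_shallow_or_swap z1 z2 z3) as [sh | sh].
  - pose proof (p1_ge_two_shallow m z1 z2 z3 z12 z23 z31 area sh). lra.
  - rewrite <- area_ratio_swap.
    assert (kappa m / 4 ^ m * area_ratio (swap_xy z1) (swap_xy z2) (swap_xy z3)
            <= p1 (S m) (swap_xy z1) (swap_xy z2) (swap_xy z3))
      by (apply p1_ge_two_shallow; auto).
    lra.
Qed.

(* The center [w] solves the linear system [2 (w - z1).(zi - z1) = |zi - z1|^2], [i = 2, 3],
   whose determinant is [area2]; Cramer's rule then factors [r^2 = |w - z1|^2]. *)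
Lemma circumradius_identity z1 z2 z3 w r :
  norm2 (psub z1 w) = r ^ 2 -> norm2 (psub z2 w) = r ^ 2 -> norm2 (psub z3 w) = r ^ 2 ->
  4 * area2 z1 z2 z3 ^ 2 * r ^ 2
  = norm2 (psub z1 z2) * norm2 (psub z2 z3) * norm2 (psub z3 z1).
Proof.
  destruct z1 as [x1 y1], z2 as [x2 y2], z3 as [x3 y3], w as [p q].
  unfold norm2, psub, area2. cbn [fst snd]. intros h1 h2 h3.
  set (u1 := x2 - x1). set (u2 := y2 - y1). set (v1 := x3 - x1). set (v2 := y3 - y1).
  set (P := p - x1). set (Q := q - y1). set (D := u1 * v2 - u2 * v1).
  assert (eq_u : 2 * (u1 * P + u2 * Q) = u1 ^ 2 + u2 ^ 2) by (unfold u1, u2, P, Q; nra).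
  assert (eq_v : 2 * (v1 * P + v2 * Q) = v1 ^ 2 + v2 ^ 2) by (unfold v1, v2, P, Q; nra).
  assert (DP : 2 * D * P = (u1 ^ 2 + u2 ^ 2) * v2 - (v1 ^ 2 + v2 ^ 2) * u2).
  { rewrite <- eq_u, <- eq_v. unfold D. ring. }
  assert (DQ : 2 * D * Q = u1 * (v1 ^ 2 + v2 ^ 2) - v1 * (u1 ^ 2 + u2 ^ 2)).
  { rewrite <- eq_u, <- eq_v. unfold D. ring. }
  assert (r_sq : r ^ 2 = P ^ 2 + Q ^ 2) by (unfold P, Q; lra).
  replace (4 * D ^ 2 * r ^ 2) with ((2 * D * P) ^ 2 + (2 * D * Q) ^ 2) by (rewrite r_sq; ring).
  rewrite DP, DQ. unfold u1, u2, v1, v2. ring.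
Qed.

Lemma menger_sq_circle z1 z2 z3 w r : area2 z1 z2 z3 <> 0 -> 0 < r ->
  Defs.dist z1 w = r -> Defs.dist z2 w = r -> Defs.dist z3 w = r ->
  (/ r) ^ 2 = 4 * area_ratio z1 z2 z3.
Proof.
  intros area r_pos d1 d2 d3.
  assert (on_circle : forall z, Defs.dist z w = r -> norm2 (psub z w) = r ^ 2).
  { intros z dz. rewrite <- dz. unfold Defs.dist. rewrite pow2_sqrt; auto using norm2_nonneg. }
  unfold area_ratio. rewrite <- (circumradius_identity z1 z2 z3 w r); auto.
  rewrite pow_inv. field. split; [lra | auto].
Qed.

Theorem lemma2p1 (n : nat) (hn : (1 <= n)%nat) :
  exists c1 : R, 0 < c1 /\
    forall (z1 z2 z3 : pt) (c : R),
      z1 <> z2 -> z1 <> z3 -> z2 <> z3 ->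
      is_menger z1 z2 z3 c ->
      p1 n z1 z2 z3 + p2 n z1 z2 z3 >= c1 * c ^ 2.
Proof.
  destruct n as [|m]; [lia |].
  assert (four_m : 0 < 4 ^ m) by (apply pow_lt; lra).
  exists (kappa m / 4 ^ S m). split.
  { apply Rmult_lt_0_compat; [apply kappa_pos | apply Rinv_0_lt_compat, pow_lt; lra]. }
  intros z1 z2 z3 c z12 z13 z23
    [[collinear ->] | [not_collinear (w & r & r_pos & d1 & d2 & d3 & ->)]].
  - change (area2 z1 z2 z3 = 0) in collinear.
    assert (area2 (swap_xy z1) (swap_xy z2) (swap_xy z3) = 0) by (rewrite area2_swap; lra).
    rewrite p2_swap, !p1_collinear; auto using swap_xy_neq. simpl. lra.
  - change (area2 z1 z2 z3 <> 0) in not_collinear.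
    rewrite (menger_sq_circle z1 z2 z3 w r) by auto.
    replace (kappa m / 4 ^ S m * (4 * area_ratio z1 z2 z3))
      with (kappa m / 4 ^ m * area_ratio z1 z2 z3) by (simpl; field; lra).
    apply Rle_ge, p1_add_p2_ge; auto.
Qed.
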